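(* There is no integral quadruple $(a,b,c,d)$ with $c>b>a\ge2$ and $d\ge3$ satisfying \[\frac{1}{a}+\frac{1}{b}+\frac{1}{c}+\frac{d+1}{2d}=2+\frac{1}{abcd}.\] *)

From mathcomp Require Import all_boot all_order all_algebra.

From mathcomp Require Import all_boot all_order all_algebra.
From mathcomp Require Import zify ring lra.
Import Order.TTheory GRing.Theory Num.Theory.
Local Open Scope ring_scope.

(** Under the size constraints the left-hand side is at most
    1/2 + 1/3 + 1/4 + 2/3 = 7/4, while the right-hand side exceeds 2. *)

Section ReciprocalBound.
Variable R : realFieldType.

Lemma invr_le_lb (k x : R) : 0 < k -> k <= x -> x^-1 <= k^-1.
Proof. by move=> k_gt0 kx; rewrite lef_pV2 ?posrE // (lt_le_trans k_gt0). Qed.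

Lemma half_succ_div (w : R) : w != 0 -> (w + 1) / (2 * w) = 2^-1 + (2 * w)^-1.
Proof. by move=> w_neq0; field; rewrite w_neq0. Qed.

Lemma sum_reciprocals_lt2 (x y z w : R) :
  2 <= x -> 3 <= y -> 4 <= z -> 3 <= w ->
  x^-1 + y^-1 + z^-1 + (w + 1) / (2 * w) < 2.
Proof.
move=> x_ge2 y_ge3 z_ge4 w_ge3.
have hx : x^-1 <= 2^-1 by apply: invr_le_lb.
have hy : y^-1 <= 3^-1 by apply: invr_le_lb.
have hz : z^-1 <= 4^-1 by apply: invr_le_lb.
have hw : (2 * w)^-1 <= 6^-1 by apply: invr_le_lb; lra.
rewrite half_succ_div; last by rewrite gt_eqF //; lra.
lra.
Qed.

End ReciprocalBound.

Lemma ler_nat_intr (R : numDomainType) (k : nat) (n : int) :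
  (k%:Z <= n)%R -> (k%:R : R) <= n%:~R.
Proof. by rewrite -(ler_int R). Qed.

Theorem proposition3p2 :
  ~ exists a b c d : int,
      [/\ (2 <= a)%R, (a < b)%R, (b < c)%R, (3 <= d)%R &
        (a%:~R^-1 + b%:~R^-1 + c%:~R^-1 + (d + 1)%:~R / (2 * d)%:~R : rat)
          = 2 + (a * b * c * d)%:~R^-1].
Proof.
case=> a [b [c [d [a_ge2 ab bc d_ge3 eq_abcd]]]].
have lhs_lt2 : a%:~R^-1 + b%:~R^-1 + c%:~R^-1 + (d + 1)%:~R / (2 * d)%:~R < 2 :> rat.
  rewrite intrD intrM; apply: sum_reciprocals_lt2; apply: ler_nat_intr => //; lia.
have rhs_gt2 : 2 < 2 + (a * b * c * d)%:~R^-1 :> rat.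
  rewrite ltrDl invr_gt0 ltr0z !mulr_gt0 //; lia.
by move: lhs_lt2; rewrite eq_abcd ltNge ltW.
Qed.
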